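(* Let $G^\sigma$ be an oriented graph whose underlying graph $G$ is a simple connected graph with $n$ vertices and $m$ edges. Then $$\frac{sr(G^\sigma)}{\alpha(G)}\geqslant \frac{4(2n-m-1)}{\sqrt{4n(n-1)-8m+1}+1}-2,$$ with equality if and only if $G\cong S_n$ or $G\cong C_3$.
   Context: An oriented graph $G^\sigma$ is obtained from a simple graph $G$ by assigning a direction to each edge. Its skew-adjacency matrix $S(G^\sigma)=[s_{x,y}]$ has $s_{x,y}=1$ if there is an arc from $x$ to $y$, $s_{x,y}=-1$ if there is an arc from $y$ to $x$, and $0$ otherwise; the skew-rank $sr(G^\sigma)$ is the rank of $S(G^\sigma)$. $\alpha(G)$ is the independence number of $G$. $S_n$ denotes the star on $n$ vertices (the single vertex when $n=1$) and $C_3$ the triangle. *)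

From HB Require Import structures.
From mathcomp Require Import all_boot all_order all_algebra.
Set Implicit Arguments. Unset Strict Implicit. Unset Printing Implicit Defensive.
Import Order.TTheory GRing.Theory Num.Theory.

Definition simple_graph (n : nat) (e : rel 'I_n) : Prop :=
  (forall x, ~~ e x x) /\ (forall x y, e x y = e y x).

(* connected (in the usual sense, vertex set assumed nonempty separately) *)
Definition connected_graph (n : nat) (e : rel 'I_n) : Prop :=
  forall x y, connect e x y.

Definition num_edges (n : nat) (e : rel 'I_n) : nat :=
  #|[set p : 'I_n * 'I_n | (p.1 < p.2)%N && e p.1 p.2]|.

Definition independent (n : nat) (e : rel 'I_n) (S : {set 'I_n}) : bool :=
  [forall x in S, forall y in S, ~~ e x y].

Definition alpha (n : nat) (e : rel 'I_n) : nat :=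
  \max_(S : {set 'I_n} | independent e S) #|S|.

Definition orientation (n : nat) (e : rel 'I_n) (o : rel 'I_n) : Prop :=
  forall x y, (o x y -> e x y) /\ (e x y -> o x y (+) o y x).

Definition skew_adj (R : pzRingType) (n : nat) (o : rel 'I_n) : 'M[R]_n :=
  \matrix_(i, j) ((o i j)%:R - (o j i)%:R)%R.

Definition skew_rank (R : fieldType) (n : nat) (o : rel 'I_n) : nat :=
  \rank (skew_adj R o).

Definition graph_iso (n k : nat) (e : rel 'I_n) (e' : rel 'I_k) : Prop :=
  exists f : 'I_n -> 'I_k, bijective f /\ forall x y, e x y = e' (f x) (f y).

Definition star_rel (k : nat) : rel 'I_k :=
  fun x y => (x != y) && ((val x == 0%N) || (val y == 0%N)).

Definition triangle_rel : rel 'I_3 := fun x y => x != y.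

From HB Require Import structures.
From mathcomp Require Import all_boot all_order all_algebra perm zify ring lra.
Set Implicit Arguments.
Unset Strict Implicit.
Unset Printing Implicit Defensive.
Import Order.TTheory GRing.Theory Num.Theory.
Local Open Scope ring_scope.

(* For a maximum independent set S, the ordered edge pairs and the ordered
   pairs of distinct vertices of S are disjoint sets of off-diagonal pairs, so
   2m + α^2 + n <= n^2 + α, i.e. 2α <= 1 + sqrt(4n(n-1) - 8m + 1).
   Deleting one endpoint of each of the m - n + 1 edges outside a spanning
   tree leaves an induced forest.  Removing a pendant edge of a forest lowers
   the rank of the principal skew-adjacency submatrix by at least 2 and the
   independence number by at least 1, so 2|U| <= sr(U) + 2α(U) on a forest U;
   hence 4n <= sr + 2α + 2m + 2.  The two bounds combine to the inequality,
   and equality forces both to be tight: then G is a complete split graph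
   (S independent, every other pair adjacent) with α = n - 1 or (n, α) = (3, 1),
   that is, a star or the triangle. *)

Section RatioBound.
Variables (R : realFieldType) (n m a s t : R).

Local Notation q := (2 * n - m - 1).
Local Notation D := (4 * n * (n - 1) - 8 * m + 1).

Lemma ratio_gapE : 0 < a -> 0 <= t -> s / a - (4 * q / (t + 1) - 2) =
  (s + 2 * a - 2 * q) / a + 2 * q * (t + 1 - 2 * a) / (a * (t + 1)).
Proof. by move=> a_gt0 t_ge0; field; rewrite !lt0r_neq0 //; lra. Qed.

Lemma count_gapE : t ^+ 2 = D ->
  (t + 1 - 2 * a) * (t - 1 + 2 * a) = 4 * (n ^+ 2 + a - (2 * m + a ^+ 2 + n)).
Proof.
move=> tE; have -> : (t + 1 - 2 * a) * (t - 1 + 2 * a) = t ^+ 2 - (2 * a - 1) ^+ 2.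
  by ring.
by rewrite tE; ring.
Qed.

Lemma count_boundE : 1 <= a -> 0 <= t -> t ^+ 2 = D ->
  (2 * m + a ^+ 2 + n <= n ^+ 2 + a) = (2 * a <= t + 1).
Proof.
move=> a_ge1 t_ge0 tE; rewrite -subr_ge0 -(pmulr_rge0 _ (_ : 0 < 4)) //.
by rewrite -count_gapE // pmulr_lge0 ?subr_ge0 //; lra.
Qed.

Lemma count_eqE : 1 <= a -> 0 <= t -> t ^+ 2 = D ->
  (2 * m + a ^+ 2 + n == n ^+ 2 + a) = (2 * a == t + 1).
Proof.
move=> a_ge1 t_ge0 tE; have four_neq0 : 4 != 0 :> R by rewrite pnatr_eq0.
rewrite eq_sym -subr_eq0 -(mulrI_eq0 _ (mulfI four_neq0)) -count_gapE //.
rewrite mulf_eq0 (gt_eqF (_ : 0 < t - 1 + 2 * a)) ?orbF; last by lra.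
by rewrite subr_eq0 eq_sym.
Qed.

Lemma ratio_lower_bound : 1 <= a -> 0 <= s -> 0 <= t -> t ^+ 2 = D ->
  2 * m + a ^+ 2 + n <= n ^+ 2 + a -> 4 * n <= s + 2 * a + 2 * m + 2 ->
  4 * q / (t + 1) - 2 <= s / a.
Proof.
move=> a_ge1 s_ge0 t_ge0 tE; rewrite count_boundE // => two_a_le rank_bound.
have a_gt0 : 0 < a by lra.
have [q_ge0 | q_lt0] := lerP 0 q.
  rewrite -subr_ge0 ratio_gapE //.
  by apply: addr_ge0; apply: divr_ge0; rewrite ?mulr_ge0 //; lra.
apply: le_trans (_ : 0 <= _); last by rewrite divr_ge0 //; lra.
by rewrite subr_le0 ler_pdivrMr; lra.
Qed.

Lemma ratio_eq_bound : 1 <= a -> 0 <= s -> 0 <= t -> t ^+ 2 = D ->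
  2 * m + a ^+ 2 + n <= n ^+ 2 + a -> 4 * n <= s + 2 * a + 2 * m + 2 ->
  s / a = 4 * q / (t + 1) - 2 <->
  2 * m + a ^+ 2 + n = n ^+ 2 + a /\ s + 2 * a + 2 * m + 2 = 4 * n.
Proof.
move=> a_ge1 s_ge0 t_ge0 tE; rewrite count_boundE // => two_a_le rank_bound.
have [a_gt0 t1_gt0] : 0 < a /\ 0 < t + 1 by split; lra.
split=> [ratio_eq | [/eqP count_eq rank_eq]]; last first.
  move: count_eq; rewrite count_eqE // => /eqP count_eq.
  apply/eqP; rewrite -subr_eq0 ratio_gapE // (_ : t + 1 - 2 * a = 0); last by lra.
  by rewrite (_ : s + 2 * a - 2 * q = 0) ?mul0r ?mulr0 ?addr0 //; lra.
have q_gt0 : 0 < q.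
  rewrite ltNge; apply/negP => q_le0; move: ratio_eq.
  have : 4 * q / (t + 1) <= 0 by rewrite pmulr_lle0 ?invr_gt0; lra.
  have : 0 <= s / a by rewrite divr_ge0 // ltW.
  lra.
move/eqP: ratio_eq; rewrite -subr_eq0 ratio_gapE // paddr_eq0; first last.
- by rewrite divr_ge0 ?mulr_ge0 //; lra.
- by rewrite divr_ge0 //; lra.
rewrite !mulf_eq0 !invr_eq0 !mulf_eq0 pnatr_eq0.
rewrite (gt_eqF a_gt0) (gt_eqF q_gt0) (gt_eqF t1_gt0) /= !orbF.
case/andP => /eqP rank_eq /eqP count_eq.
by split; [apply/eqP; rewrite count_eqE //; apply/eqP | ]; lra.
Qed.

End RatioBound.

Section PrincipalRank.
Variables (F : fieldType) (n : nat).
Implicit Types (A : 'M[F]_n) (U V : {set 'I_n}).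

Definition principal_mx U A : 'M[F]_n :=
  \matrix_(i, j) if (i \in U) && (j \in U) then A i j else 0.

Lemma principal_mxT A : principal_mx setT A = A.
Proof. by apply/matrixP => i j; rewrite mxE !inE. Qed.

Lemma principal_mxS U V A :
  U \subset V -> principal_mx U (principal_mx V A) = principal_mx U A.
Proof.
move=> sUV; apply/matrixP => i j; rewrite !mxE.
case: (boolP (i \in U)) => [/(subsetP sUV)-> | _] //.
by case: (boolP (j \in U)) => [/(subsetP sUV)-> | _].
Qed.

Lemma mxrank_principal U A : (\rank (principal_mx U A) <= \rank A)%N.
Proof.
pose D := diag_mx (\row_i ((i \in U)%:R : F)).
have -> : principal_mx U A = D *m A *m D.
  apply/matrixP => i j; rewrite mul_mx_diag mul_diag_mx !mxE.
  by case: (i \in U); case: (j \in U); rewrite ?mulr0 ?mul0r ?mulr1 ?mul1r.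
exact: leq_trans (mxrankM_maxl _ _) (mxrankM_maxr _ _).
Qed.

Lemma mxrank_principalS U V A :
  U \subset V -> (\rank (principal_mx U A) <= \rank (principal_mx V A))%N.
Proof. by move=> sUV; rewrite -(principal_mxS A sUV) mxrank_principal. Qed.

Lemma mxrank_row_col_support A c :
  (forall i j, i != c -> j != c -> A i j = 0) -> (\rank A <= 2)%N.
Proof.
move=> A_supp.
pose u : 'cV[F]_n := \col_i (i == c)%:R.
pose v : 'cV[F]_n := \col_i ((i != c)%:R * A i c).
pose w : 'rV[F]_n := \row_j (j == c)%:R.
have -> : A = u *m row c A + v *m w.
  apply/matrixP => i j; rewrite !mxE !big_ord1 !mxE.
  have [-> | ic] := eqVneq i c; first by rewrite /= !(mul1r, mul0r, addr0).
  rewrite /= !mul0r add0r mul1r.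
  by have [-> | jc] := eqVneq j c; rewrite /= ?mulr1 // mulr0 A_supp.
apply: leq_trans (mxrank_add _ _) _; rewrite -[2%N]/(1 + 1)%N leq_add //.
  exact: leq_trans (mxrankM_maxl _ _) (rank_leq_col _).
exact: leq_trans (mxrankM_maxr _ _) (rank_leq_row _).
Qed.

Lemma mxrank_skew_odd A : A^T = - A -> odd n -> 2 != 0 :> F -> (\rank A < n)%N.
Proof.
move=> skewA odd_n two_neq0.
have detA0 : \det A = 0.
  apply/eqP; rewrite -(mulrI_eq0 _ (mulfI two_neq0)) mulr2n mulrDl mul1r addr_eq0.
  by rewrite -{1}det_tr skewA -scaleN1r detZ -signr_odd odd_n expr1 mulN1r.
rewrite ltn_neqAle rank_leq_row andbT; apply/negP => /eqP full.
have : row_free A by rewrite /row_free full.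
by rewrite row_free_unit unitmxE unitfE detA0 eqxx.
Qed.

End PrincipalRank.

Section PendantRank.
Variables (F : fieldType) (n : nat) (e : rel 'I_n) (A : 'M[F]_n).
Hypothesis e_irr : irreflexive e.
Hypothesis e_sym : symmetric e.
Hypothesis A_supp : forall i j, (A i j != 0) = e i j.

Lemma mxrank_principal_pendant (U : {set 'I_n}) x v :
  x \in U -> v \in U -> e x v -> (forall y, y \in U -> e x y -> y = v) ->
  (\rank (principal_mx (U :\ x :\ v) A) + 2 <= \rank (principal_mx U A))%N.
Proof.
move=> xU vU exv x_leaf.
set U' := U :\ x :\ v; set M := principal_mx U A; set X := principal_mx U' A.
have ME i j : M i j = if (i \in U) && (j \in U) then A i j else 0 by rewrite mxE.
have XE i j : X i j = if (i \in U') && (j \in U') then A i j else 0 by rewrite mxE.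
clearbody M X.
have xv : x != v by apply: contraTneq exv => ->; rewrite e_irr.
have Mxv_neq0 : M x v != 0 by rewrite ME xU vU A_supp.
have Mvx_neq0 : M v x != 0 by rewrite ME xU vU A_supp e_sym.
have Mvv : M v v = 0 by rewrite ME vU; apply/eqP; rewrite -[_ == 0]negbK A_supp e_irr.
have Mx j : j != v -> M x j = 0.
  move=> jv; rewrite ME xU /=; case: ifP => // jU.
  by apply/eqP; rewrite -[_ == 0]negbK A_supp; apply: contra jv => /(x_leaf _ jU) ->.
have M_x i : i \in U' -> A i x = 0.
  rewrite !inE => /and3P[iv _ iU]; apply/eqP; rewrite -[_ == 0]negbK A_supp e_sym.
  by apply: contra iv => /(x_leaf _ iU) ->.
have X_x i : X i x = 0 by rewrite XE /U' !inE eqxx /= !andbF.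
have X_v i : X i v = 0 by rewrite XE /U' !inE eqxx /= andbF.
have XM : (X <= M)%MS.
  apply/row_subP => i; have [iU' | iU'] := boolP (i \in U'); last first.
    rewrite (_ : row i X = 0) ?sub0mx //.
    by apply/rowP => j; rewrite !mxE XE (negPf iU').
  have -> : row i X = row i M - (M i v / M x v) *: row x M.
    have iU : i \in U by move: iU'; rewrite /U' !inE => /and3P[].
    apply/rowP => j; rewrite !mxE.
    have [-> | jv] := eqVneq j v; first by rewrite X_v divfK // subrr.
    rewrite (Mx j jv) mulr0 subr0.
    have [-> | jx] := eqVneq j x; first by rewrite X_x ME iU xU M_x.
    by rewrite XE ME iU' iU /U' !inE jv jx.
  by rewrite addmx_sub ?eqmx_opp ?scalemx_sub ?row_sub.
pose Y := col_mx (row x M) (row v M).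
have YM : (Y <= M)%MS by rewrite col_mx_sub !row_sub.
have Y_inj (b : 'rV_(1 + 1)) : (b *m Y) 0 x = 0 -> (b *m Y) 0 v = 0 -> b = 0.
  rewrite -[b]hsubmxK mul_row_col !mxE !big_ord1 !mxE Mx // Mvv.
  rewrite !(mulr0, add0r, addr0).
  move=> /eqP; rewrite mulf_eq0 (negPf Mvx_neq0) orbF => /eqP b2.
  move=> /eqP; rewrite mulf_eq0 (negPf Mxv_neq0) orbF => /eqP b1.
  by rewrite -row_mx0; congr row_mx; apply/rowP => k; rewrite (ord1 k) !mxE.
have XY0 : (X :&: Y)%MS = 0.
  apply/eqP; rewrite -submx0; apply/rV_subP => w.
  rewrite sub_capmx submx0 => /andP[/submxP[c ->] /submxP[b cXE]].
  by rewrite cXE (Y_inj b) ?mul0mx // -cXE !mxE big1 // => k _; rewrite ?X_x ?X_v mulr0.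
have rankY : \rank Y = 2%N.
  by apply/eqP/inj_row_free => b bY0; apply: Y_inj; rewrite bY0 mxE.
rewrite -rankY -mxrank_disjoint_sum //; apply: mxrankS.
by rewrite addsmx_sub XM YM.
Qed.
End PendantRank.

Section Independence.
Variables (n : nat) (e : rel 'I_n).
Implicit Types (S U V W : {set 'I_n}).

Lemma independentP S :
  reflect (forall x y, x \in S -> y \in S -> ~~ e x y) (independent e S).
Proof.
apply: (iffP forall_inP) => [S_ind x y xS yS | S_ind x xS].
  by move/forall_inP: (S_ind x xS); apply.
by apply/forall_inP => y; apply: S_ind.
Qed.

Definition alpha_on U : nat :=
  \max_(S : {set 'I_n} | (S \subset U) && independent e S) #|S|.

Lemma alpha_onT : alpha_on setT = alpha e.
Proof. by apply: eq_bigl => S; rewrite subsetT. Qed.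

Lemma leq_alpha_on U S : S \subset U -> independent e S -> (#|S| <= alpha_on U)%N.
Proof. by move=> sSU S_ind; apply: leq_bigmax_cond; rewrite sSU S_ind. Qed.

Lemma alpha_onS U V : U \subset V -> (alpha_on U <= alpha_on V)%N.
Proof.
move=> sUV; apply/bigmax_leqP => S /andP[sSU S_ind].
exact: leq_alpha_on (subset_trans sSU sUV) S_ind.
Qed.

Lemma alpha_onP U :
  exists2 S : {set 'I_n}, (S \subset U) && independent e S & #|S| = alpha_on U.
Proof.
have : (0 < #|[pred S : {set 'I_n} | (S \subset U) && independent e S]|)%N.
  apply/card_gt0P; exists set0; rewrite inE sub0set.
  by apply/independentP => x y; rewrite inE.
by case/(eq_bigmax_cond (fun S => #|S|)) => S; rewrite inE; exists S.
Qed.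

Lemma alpha_witness : exists2 S : {set 'I_n}, independent e S & #|S| = alpha e.
Proof.
by have [S /andP[_ S_ind]] := alpha_onP setT; rewrite alpha_onT; exists S.
Qed.

Hypothesis e_irr : irreflexive e.

Lemma independent1 x : independent e [set x].
Proof. by apply/independentP => y z /set1P-> /set1P->; rewrite e_irr. Qed.

Lemma alpha_gt0 (x : 'I_n) : (0 < alpha e)%N.
Proof. by rewrite -alpha_onT -(cards1 x) leq_alpha_on ?subsetT ?independent1. Qed.

Hypothesis e_sym : symmetric e.

Lemma alpha_on_pendant U x v : x \in U -> v \in U ->
  (forall y, y \in U -> e x y -> y = v) ->
  (alpha_on (U :\ x :\ v) < alpha_on U)%N.
Proof.
move=> xU vU x_leaf.
have [S /andP[sS S_ind] <-] := alpha_onP (U :\ x :\ v).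
have [xS vS] : x \notin S /\ v \notin S.
  by split; apply/negP => /(subsetP sS); rewrite !inE eqxx ?andbF.
have sSU : S \subset U.
  by apply: subset_trans sS _; apply/subsetP => y; rewrite !inE => /and3P[].
have -> : #|S|.+1 = #|x |: S| by rewrite cardsU1 xS.
rewrite leq_alpha_on // ?subUset ?sub1set ?xU //.
apply/independentP => y z; rewrite !inE.
have x_nadj w : w \in S -> ~~ e x w.
  by move=> wS; apply: contra vS => /(x_leaf _ (subsetP sSU _ wS)) <-.
case/predU1P=> [-> | yS]; case/predU1P=> [-> | zS]; rewrite ?e_irr ?x_nadj //.
  by rewrite e_sym x_nadj.
by move/independentP: S_ind; apply.
Qed.

(* Equivalent to acyclicity of the subgraph induced on [U]. *)
Definition induced_forest U := forall W, W \subset U ->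
  (exists x y, [/\ x \in W, y \in W & e x y]) ->
  exists2 z, z \in W & #|[set y in W | e z y]| = 1%N.

Lemma induced_forestS U V : U \subset V -> induced_forest V -> induced_forest U.
Proof. by move=> sUV V_forest W sWU; apply: V_forest (subset_trans sWU sUV). Qed.

End Independence.

Section ForestRank.
Variables (F : fieldType) (n : nat) (e : rel 'I_n) (A : 'M[F]_n).
Hypothesis e_irr : irreflexive e.
Hypothesis e_sym : symmetric e.
Hypothesis A_supp : forall i j, (A i j != 0) = e i j.

Lemma forest_rank_bound (U : {set 'I_n}) : induced_forest e U ->
  (2 * #|U| <= \rank (principal_mx U A) + 2 * alpha_on e U)%N.
Proof.
elim: {U}_.+1 {-2}U (ltnSn #|U|) => // k IH U ltUk U_forest.
case: (pickP [pred p : 'I_n * 'I_n | [&& p.1 \in U, p.2 \in U & e p.1 p.2]]).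
  move=> [x y] /and3P[xU yU exy].
  have [|z zU /eqP/cards1P[v Nz]] := U_forest U (subxx U); first by exists x, y.
  have /setIdP[vU ezv] : v \in [set y in U | e z y] by rewrite Nz set11.
  have z_leaf w : w \in U -> e z w -> w = v.
    by move=> wU ezw; apply/set1P; rewrite -Nz inE wU ezw.
  have zv : z != v by apply: contraTneq ezv => ->; rewrite e_irr.
  have cardU : #|U| = (#|U :\ z :\ v| + 2)%N.
    rewrite (cardsD1 z U) zU (cardsD1 v (U :\ z)) !inE eq_sym zv vU.
    by rewrite addnC add1n addn1 addn2.
  have sU'U : U :\ z :\ v \subset U := subset_trans (subD1set _ v) (subD1set U z).
  have := IH (U :\ z :\ v) _ (induced_forestS sU'U U_forest).
  have := mxrank_principal_pendant e_irr e_sym A_supp zU vU ezv z_leaf.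
  have := alpha_on_pendant e_irr e_sym zU vU z_leaf.
  by rewrite cardU in ltUk *; lia.
move=> no_edge; have U_ind : independent e U.
  apply/independentP => x y xU yU; apply/negP => exy.
  by have := no_edge (x, y); rewrite /= xU yU exy.
have := leq_alpha_on (subxx U) U_ind; lia.
Qed.
End ForestRank.

Section SpanningTree.
Variables (n : nat) (e : rel 'I_n) (r : 'I_n).
Hypothesis e_irr : irreflexive e.
Hypothesis e_sym : symmetric e.
Hypothesis e_conn : connected_graph e.

Definition reachable_in x k :=
  [exists p : k.-tuple 'I_n, path e r p && (last r p == x)].

Lemma reachable_in_exists x : exists k, reachable_in x k.
Proof.
have /connectP[p p_path ->] := e_conn r x.
by exists (size p); apply/existsP; exists (in_tuple p); rewrite /= p_path eqxx.
Qed.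

Definition dist x := ex_minn (reachable_in_exists x).

Lemma dist_parent x : x != r -> exists2 y, e x y & (dist y < dist x)%N.
Proof.
rewrite /dist; case: ex_minnP => k /existsP[p /andP[p_path /eqP p_last]] k_min xr.
have p_size := size_tuple p; move: p_path p_last p_size.
case/lastP: (tval p) => [|s z] /=; first by move=> _ rx; rewrite rx eqxx in xr.
rewrite rcons_path last_rcons size_rcons => /andP[s_path ez] <- <-.
exists (last r s); first by rewrite e_sym.
rewrite /dist; case: ex_minnP => k' _; apply.
by apply/existsP; exists (in_tuple s); rewrite /= s_path eqxx.
Qed.

Definition parent x := odflt x [pick y | e x y && (dist y < dist x)%N].

Lemma parentP x : x != r -> e x (parent x) && (dist (parent x) < dist x)%N.
Proof.
move=> xr; rewrite /parent; case: pickP => [y -> // | no_parent].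
by have [y exy dyx] := dist_parent xr; move: (no_parent y); rewrite exy dyx.
Qed.

Definition tree_edge x y :=
  ((x != r) && (y == parent x)) || ((y != r) && (x == parent y)).

Lemma tree_edge_sym : symmetric tree_edge.
Proof. by move=> x y; rewrite /tree_edge orbC. Qed.

Lemma tree_edge_sub x y : tree_edge x y -> e x y.
Proof.
by case/orP=> /andP[/parentP/andP[? _] /eqP->] //; rewrite e_sym.
Qed.

(* In [W], the endpoint of a tree edge farthest from the root is a leaf. *)
Lemma tree_edge_forest : induced_forest tree_edge setT.
Proof.
move=> W _ [x [y [xW yW txy]]].
pose P z := (z \in W) && [exists y in W, tree_edge z y].
have Px : P x by rewrite /P xW; apply/existsP; exists y; rewrite yW.
case: (arg_maxnP dist Px) => z /andP[zW /existsP[y0 /andP[y0W tzy0]]] z_max.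
have to_parent w : w \in W -> tree_edge z w -> w = parent z.
  move=> wW /orP[/andP[_ /eqP //] | /andP[wr /eqP zw]].
  have /z_max : P w.
    by rewrite /P wW; apply/existsP; exists z; rewrite zW /tree_edge wr zw eqxx.
  by case/andP: (parentP wr) => _; rewrite -zw => /leq_trans/[apply]; rewrite ltnn.
exists z => //; apply/eqP/cards1P; exists y0; apply/setP => w; rewrite !inE.
apply/andP/eqP => [[wW tzw] | ->]; last by [].
by rewrite (to_parent w) // (to_parent y0).
Qed.

Lemma tree_num_edges : (n.-1 <= num_edges tree_edge)%N.
Proof.
pose g (x : 'I_n) : 'I_n * 'I_n :=
  if (x < parent x)%N then (x, parent x) else (parent x, x).
have g_edge x :
  x != r -> g x \in [set p : 'I_n * 'I_n | (p.1 < p.2)%N && tree_edge p.1 p.2].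
  move=> xr; have /andP[exp _] := parentP xr.
  have neq : (x : nat) != parent x.
    by apply: contraTneq exp => /val_inj <-; rewrite e_irr.
  rewrite inE /g; case: ifP => lt; first by rewrite /= lt /tree_edge xr eqxx.
  by rewrite /= ltn_neqAle eq_sym neq leqNgt lt /tree_edge eqxx xr orbT.
have g_inj : {in [set~ r] &, injective g}.
  move=> x y; rewrite !inE => xr yr.
  have no_swap : x = parent y -> parent x = y -> False.
    move=> xE yE; have /andP[_] := parentP xr; have /andP[_] := parentP yr.
    by rewrite -xE yE => /ltn_trans/[apply]; rewrite ltnn.
  by rewrite /g; do 2!case: ifP => _; case=> xE yE //; case: no_swap.
rewrite -[n in n.-1]card_ord -(cardsC1 r) -(card_in_imset g_inj) /num_edges.
apply/subset_leq_card/subsetP => _ /imsetP[x xr ->].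
by apply: g_edge; rewrite !inE in xr.
Qed.

Definition nontree_edges :=
  [set p : 'I_n * 'I_n | [&& (p.1 < p.2)%N, e p.1 p.2 & ~~ tree_edge p.1 p.2]].

Lemma num_edges_split : (#|nontree_edges| + num_edges tree_edge)%N = num_edges e.
Proof.
rewrite /num_edges -[RHS](cardsID [set p : 'I_n * 'I_n | tree_edge p.1 p.2]) addnC.
congr (_ + _)%N; apply: eq_card => p; rewrite !inE.
  by apply/andP/andP => [[lt tp] | [/andP[lt _] //]]; rewrite lt tree_edge_sub.
by rewrite [RHS]andbC -andbA.
Qed.

Let feedback := [set p.1 | p in nontree_edges].

Lemma tree_edge_off_feedback x y :
  x \notin feedback -> y \notin feedback -> e x y = tree_edge x y.
Proof.
move=> xF yF; apply/idP/idP => [exy | /tree_edge_sub //].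
have [lt | gt | eq] := ltngtP x y.
- apply: contraNT xF => ntxy; apply/imsetP.
  by exists (x, y); rewrite // inE /= lt exy ntxy.
- rewrite tree_edge_sym; apply: contraNT yF => ntyx; apply/imsetP.
  by exists (y, x); rewrite // inE /= gt e_sym exy ntyx.
- by move: exy; rewrite (val_inj eq) e_irr.
Qed.

Lemma exists_forest_complement :
  exists F : {set 'I_n}, induced_forest e (~: F) /\ (#|F| + n.-1 <= num_edges e)%N.
Proof.
exists feedback; split.
  move=> W sW [x [y [xW yW exy]]].
  have offF w : w \in W -> w \notin feedback by move=> /(subsetP sW); rewrite inE.
  have [|z zW Nz] := tree_edge_forest (subsetT W).
    by exists x, y; rewrite -tree_edge_off_feedback ?offF.
  exists z => //; rewrite -Nz; apply: eq_card => w; rewrite !inE.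
  by case wW: (w \in W); rewrite //= tree_edge_off_feedback ?offF.
rewrite -num_edges_split leq_add ?tree_num_edges //.
exact: leq_imset_card.
Qed.

End SpanningTree.

Section EdgeCount.
Variables (n : nat) (e : rel 'I_n).

Definition split_complete (S : {set 'I_n}) :=
  [forall x, forall y, (x != y) ==> ((x \in S) && (y \in S)) || e x y].

Hypothesis e_irr : irreflexive e.
Hypothesis e_sym : symmetric e.

Let offdiag := [set p : 'I_n * 'I_n | p.1 != p.2].
Let arcs := [set p : 'I_n * 'I_n | e p.1 p.2].
Let pairs_in (S : {set 'I_n}) := [set p in setX S S | p.1 != p.2].

Let card_pairs_in S : (#|pairs_in S| + #|S| = #|S| ^ 2)%N.
Proof.
rewrite -mulnn -cardsX.
rewrite -(cardsID [set p : 'I_n * 'I_n | p.1 == p.2] (setX S S)) [RHS]addnC.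
congr (_ + _)%N; first by apply: eq_card => p; rewrite !inE andbC.
have diag_inj : injective (fun x : 'I_n => (x, x)) by move=> x y [].
rewrite -(card_imset S diag_inj); apply: eq_card => -[x y]; rewrite !inE /=.
apply/imsetP/idP => [[z zS [-> ->]] | /andP[/andP[xS _] /eqP <-]]; last by exists x.
by rewrite zS eqxx.
Qed.

Let card_offdiag : (#|offdiag| + n = n ^ 2)%N.
Proof.
have := card_pairs_in setT; rewrite cardsT card_ord => <-.
by congr (_ + _)%N; apply: eq_card => p; rewrite !inE.
Qed.

Let card_arcs : #|arcs| = (2 * num_edges e)%N.
Proof.
rewrite /num_edges -(cardsID [set p : 'I_n * 'I_n | (p.1 < p.2)%N] arcs) mul2n -addnn.
congr (_ + _)%N; first by apply: eq_card => p; rewrite !inE andbC.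
have swap_inj : injective (fun p : 'I_n * 'I_n => (p.2, p.1)).
  by move=> [? ?] [? ?] [-> ->].
rewrite -(card_imset _ swap_inj); apply: eq_card => -[x y]; rewrite !inE /=.
apply/imsetP/andP => [[[x' y'] /[!inE] /andP[ge ex'y'] [-> ->]] | [lt exy]] /=.
  rewrite e_sym ex'y' ltn_neqAle leqNgt ge andbT; split=> //.
  by apply: contraTneq ex'y' => /val_inj ->; rewrite e_irr.
by exists (y, x); rewrite // !inE /= e_sym exy -leqNgt ltnW.
Qed.

Lemma independent_count_leqif S : independent e S ->
  (2 * num_edges e + #|S| ^ 2 + n <= n ^ 2 + #|S| ?= iff split_complete S)%N.
Proof.
move=> S_ind.
have disj : [disjoint arcs & pairs_in S].
  apply/pred0P => -[x y] /=; rewrite !inE /=.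
  apply/negP => /and3P[exy /andP[xS yS] _].
  by move/independentP: S_ind => /(_ x y xS yS); rewrite exy.
have sub : arcs :|: pairs_in S \subset offdiag.
  apply/subsetP => -[x y]; rewrite !inE /= => /orP[exy | /andP[_ //]].
  by apply: contraTneq exy => ->; rewrite e_irr.
have := leqif_add (subset_leqif_card sub) (elimT (leqif_refl (n + #|S|) true) isT).
rewrite andbT cardsU (disjoint_setI0 disj) cards0 subn0 card_arcs.
have -> : (2 * num_edges e + #|pairs_in S| + (n + #|S|) =
           2 * num_edges e + #|S| ^ 2 + n)%N by rewrite -card_pairs_in; lia.
have -> : (#|offdiag| + (n + #|S|) = n ^ 2 + #|S|)%N by rewrite -card_offdiag; lia.
suff -> : (offdiag \subset arcs :|: pairs_in S) = split_complete S by [].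
apply/subsetP/forallP => [off_sub x | all_off [x y]].
  apply/forallP => y; apply/implyP => xy; have := off_sub (x, y).
  by rewrite !inE /= xy orbC => /(_ isT); case: (e x y); rewrite ?andbT.
rewrite !inE /= => xy; move/forallP/(_ y)/implyP/(_ xy): (all_off x).
by case/orP=> [/andP[-> ->] | ->]; rewrite ?xy ?orbT.
Qed.

Lemma alpha_count_bound : (2 * num_edges e + alpha e ^ 2 + n <= n ^ 2 + alpha e)%N.
Proof.
by have [S S_ind <-] := alpha_witness e; apply: (independent_count_leqif S_ind).1.
Qed.

Lemma split_complete_alpha S :
  independent e S -> (0 < #|S|)%N -> split_complete S -> #|S| = alpha e.
Proof.
move=> S_ind S_gt0 S_split.
have /eqP := (independent_count_leqif S_ind).2; rewrite S_split => S_count.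
have := alpha_count_bound.
have : (#|S| <= alpha e)%N by rewrite -alpha_onT leq_alpha_on ?subsetT.
nia.
Qed.

Lemma split_completeE S : independent e S -> split_complete S ->
  forall x y, e x y = (x != y) && ~~ ((x \in S) && (y \in S)).
Proof.
move=> /independentP S_ind /forallP S_split x y.
have [-> | xy] := eqVneq x y; first by rewrite e_irr.
move/forallP/(_ y)/implyP/(_ xy): (S_split x).
case: (boolP ((x \in S) && (y \in S))) => [/andP[xS yS] _ | _ /= -> //].
by rewrite (negPf (S_ind x y xS yS)).
Qed.

End EdgeCount.

Section NamedGraphs.
Variables (n : nat) (e : rel 'I_n).

Lemma graph_iso_starP (n_gt0 : (0 < n)%N) : graph_iso e (@star_rel n) <->
  exists c, forall x y, e x y = (x != y) && ((x == c) || (y == c)).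
Proof.
pose z := Ordinal n_gt0.
have val_eq0 (w : 'I_n) : (val w == 0%N) = (w == z) by rewrite -val_eqE.
split=> [[f [[g fK gK] eE]] | [c eE]].
  exists (g z) => x y; rewrite eE /star_rel (inj_eq (can_inj fK)) !val_eq0.
  by rewrite -!(can2_eq fK gK).
exists (tperm c z); split; first by exists (tperm c z) => x; rewrite tpermK.
move=> x y; rewrite eE /star_rel (inj_eq perm_inj) !val_eq0.
by rewrite !(canF_eq (tpermK c z)) tpermR.
Qed.

Lemma graph_iso_triangleP :
  graph_iso e triangle_rel <-> n = 3%N /\ forall x y, e x y = (x != y).
Proof.
split=> [[f [f_bij eE]] | [n3 eE]].
  split; first by rewrite -[n]card_ord (bij_eq_card f_bij) card_ord.
  by move=> x y; rewrite eE /triangle_rel (inj_eq (bij_inj f_bij)).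
exists (cast_ord n3); split.
  by exists (cast_ord (esym n3)); [apply: cast_ordK | apply: cast_ordKV].
by move=> x y; rewrite eE /triangle_rel (inj_eq (cast_ord_inj (eq_n := n3))).
Qed.

End NamedGraphs.

Section SkewAdjacency.
Variables (R : nzRingType) (n : nat) (e o : rel 'I_n).
Hypothesis e_sym : symmetric e.
Hypothesis o_orient : orientation e o.

Lemma skew_adj_neq0 i j : (skew_adj R o i j != 0) = e i j.
Proof.
rewrite mxE; have [oij_e eij_o] := o_orient i j; have [oji_e _] := o_orient j i.
have [eij | neij] := boolP (e i j).
  move: (eij_o eij); case: (o i j); case: (o j i) => // _.
    by rewrite subr0 oner_eq0.
  by rewrite sub0r oppr_eq0 oner_eq0.
have neji : ~~ e j i by rewrite e_sym.
by rewrite (contraNF oij_e neij) (contraNF oji_e neji) subrr eqxx.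
Qed.

Lemma skew_adj_tr : (skew_adj R o)^T = - skew_adj R o.
Proof. by apply/matrixP => i j; rewrite !mxE opprB. Qed.

End SkewAdjacency.

Section SkewRankBounds.
Variables (R : fieldType) (n : nat) (e o : rel 'I_n).
Hypothesis e_irr : irreflexive e.
Hypothesis e_sym : symmetric e.
Hypothesis o_orient : orientation e o.

Local Notation A := (skew_adj R o).
Let A_supp := skew_adj_neq0 R e_sym o_orient.

Lemma skew_rank_forest_bound (r : 'I_n) : connected_graph e ->
  (4 * n <= skew_rank R o + 2 * alpha e + 2 * num_edges e + 2)%N.
Proof.
move=> e_conn.
have [F [F_forest F_card]] := exists_forest_complement r e_irr e_sym e_conn.
have := forest_rank_bound e_irr e_sym A_supp F_forest.
have := mxrank_principal (~: F) A; have := alpha_onS e (subsetT (~: F)).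
have := cardsC F; have := ltn_ord r; move: F_card.
rewrite alpha_onT card_ord /skew_rank -subn1.
set rk := \rank (principal_mx _ _); lia.
Qed.

Lemma skew_rank_edge x y : e x y -> (2 <= skew_rank R o)%N.
Proof.
move=> exy; have x_leaf z : z \in [set x; y] -> e x z -> z = y.
  by case/set2P=> [-> | //]; rewrite e_irr.
have := mxrank_principal_pendant e_irr e_sym A_supp (set21 x y) (set22 x y) exy x_leaf.
move=> /(leq_trans (leq_addl _ _)) /leq_trans; apply.
by rewrite /skew_rank -{2}(principal_mxT A) mxrank_principalS ?subsetT.
Qed.

Lemma skew_rank_star c : (forall x y, e x y -> (x == c) || (y == c)) ->
  (skew_rank R o <= 2)%N.
Proof.
move=> c_cover; apply: (mxrank_row_col_support (c := c)) => i j ic jc; apply/eqP.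
rewrite -[_ == 0]negbK A_supp; apply: contraNN ic => /c_cover.
by rewrite (negPf jc) orbF.
Qed.

End SkewRankBounds.

Lemma skew_rank_odd (R : numFieldType) n (o : rel 'I_n) :
  odd n -> (skew_rank R o < n)%N.
Proof.
by move=> odd_n; apply: mxrank_skew_odd (skew_adj_tr R o) odd_n _; rewrite pnatr_eq0.
Qed.

Lemma connected_edge n (e : rel 'I_n) : connected_graph e -> (1 < n)%N ->
  exists x y, e x y.
Proof.
move=> e_conn n_gt1; have n_gt0 := ltnW n_gt1.
have /connectP[[|y p] /= p_path p_last] := e_conn (Ordinal n_gt0) (Ordinal n_gt1).
  by move/(congr1 val): p_last.
by case/andP: p_path => exy _; exists (Ordinal n_gt0), y.
Qed.

Section ExtremalGraphs.
Variables (R : numFieldType) (n : nat) (e o : rel 'I_n).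
Hypothesis n_gt0 : (0 < n)%N.
Hypothesis e_irr : irreflexive e.
Hypothesis e_sym : symmetric e.
Hypothesis e_conn : connected_graph e.
Hypothesis o_orient : orientation e o.

Local Notation m := (num_edges e).
Local Notation a := (alpha e).
Local Notation sr := (skew_rank R o).

Let count_eq_split S : independent e S ->
  (2 * m + #|S| ^ 2 + n == n ^ 2 + #|S|)%N = split_complete e S.
Proof. by move=> S_ind; rewrite (independent_count_leqif e_irr e_sym S_ind).2. Qed.

Lemma extremal_graph_iso :
  (2 * m + a ^ 2 + n = n ^ 2 + a)%N -> (sr + 2 * a + 2 * m + 2 = 4 * n)%N ->
  graph_iso e (@star_rel n) \/ graph_iso e triangle_rel.
Proof.
move=> count_eq rank_eq.
have [S S_ind S_card] := alpha_witness e.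
have S_split : split_complete e S by rewrite -count_eq_split // S_card count_eq.
have eE := split_completeE e_irr S_ind S_split.
have [n_le1 | n_gt1] := leqP n 1.
  left; apply/graph_iso_starP => //; exists (Ordinal n_gt0) => x y.
  have -> : x = y by apply: ord_inj; have := ltn_ord x; have := ltn_ord y; lia.
  by rewrite e_irr eqxx.
have [x [y exy]] := connected_edge e_conn n_gt1.
have a_lt_n : (a < n)%N.
  rewrite -S_card -[X in (_ < X)%N](card_ord n) -cardsT; apply: proper_card.
  rewrite properT.
  by apply: contraTneq exy => S_full; rewrite eE S_full !inE andbF.
have sr_ge2 := skew_rank_edge R e_irr e_sym o_orient exy.
have a_gt0 := alpha_gt0 e_irr x.
have [a_n | a_n] := eqVneq (a + 1)%N n.
  left; apply/graph_iso_starP => //.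
  have /cards1P[c Sc] : #|~: S| == 1%N.
    by apply/eqP; have := cardsC S; rewrite S_card card_ord; lia.
  by exists c => u v; rewrite eE -[S]setCK Sc !inE negb_and !negbK.
have [n3 a1] : n = 3%N /\ a = 1%N.
  have : (n + a <= 4)%N by nia.
  by lia.
right; apply/graph_iso_triangleP; split=> // u v.
have /cards1P[c Sc] : #|S| == 1%N by rewrite S_card a1.
rewrite eE Sc !inE; have [-> | uv] //= := eqVneq u v.
by apply/negP => /andP[/eqP uc /eqP vc]; rewrite uc vc eqxx in uv.
Qed.

Let split_complete_count S :
  independent e S -> (0 < #|S|)%N -> split_complete e S ->
  #|S| = a /\ (2 * m + a ^ 2 + n = n ^ 2 + a)%N.
Proof.
move=> S_ind S_gt0 S_split.
have S_card := split_complete_alpha e_irr e_sym S_ind S_gt0 S_split.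
by split=> //; apply/eqP; rewrite -S_card count_eq_split.
Qed.

Lemma graph_iso_extremal :
  graph_iso e (@star_rel n) \/ graph_iso e triangle_rel ->
  (2 * m + a ^ 2 + n = n ^ 2 + a)%N /\ (sr + 2 * a + 2 * m + 2 = 4 * n)%N.
Proof.
have single_gt0 (c : 'I_n) : (0 < #|[set c]|)%N by rewrite cards1.
case=> [/(graph_iso_starP e n_gt0)[c eE] | /graph_iso_triangleP[n3 eE]].
  have [n_le1 | n_gt1] := leqP n 1.
    have n1 : n = 1%N by lia.
    have c_split : split_complete e [set c].
      apply/forallP => u; apply/forallP => v.
      have -> : u = v by apply: ord_inj; have := ltn_ord u; have := ltn_ord v; lia.
      by rewrite eqxx.
    have [c_card count_eq] :=
      split_complete_count (independent1 e_irr c) (single_gt0 c) c_split.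
    have odd_n : odd n by rewrite n1.
    have := skew_rank_odd R o odd_n; rewrite cards1 in c_card; split=> //; lia.
  have S_ind : independent e (~: [set c]).
    apply/independentP => u v; rewrite !inE eE.
    by move=> /negPf-> /negPf->; rewrite andbF.
  have S_split : split_complete e (~: [set c]).
    apply/forallP => u; apply/forallP => v; apply/implyP => uv.
    by rewrite !inE eE uv /=; case: (u == c); case: (v == c).
  have S_gt0 : (0 < #|~: [set c]|)%N by rewrite cardsC1 card_ord -subn1; lia.
  have [S_card count_eq] := split_complete_count S_ind S_gt0 S_split.
  have [x [y exy]] := connected_edge e_conn n_gt1.
  have := skew_rank_edge R e_irr e_sym o_orient exy.
  have : (sr <= 2)%N.
    apply: (skew_rank_star R e_sym o_orient (c := c)) => u v.
    by rewrite eE => /andP[].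
  rewrite cardsC1 card_ord -subn1 in S_card; split=> //; nia.
pose c := Ordinal n_gt0.
have c_split : split_complete e [set c].
  by apply/forallP => u; apply/forallP => v; apply/implyP => uv; rewrite eE uv orbT.
have [c_card count_eq] :=
  split_complete_count (independent1 e_irr c) (single_gt0 c) c_split.
have [n_gt1 odd_n] : (1 < n)%N /\ odd n by rewrite n3.
have [x [y exy]] := connected_edge e_conn n_gt1.
have := skew_rank_edge R e_irr e_sym o_orient exy.
have := skew_rank_odd R o odd_n.
rewrite cards1 in c_card; split=> //; lia.
Qed.

Lemma extremal_iff :
  (2 * m + a ^ 2 + n = n ^ 2 + a /\ sr + 2 * a + 2 * m + 2 = 4 * n)%N <->
  graph_iso e (@star_rel n) \/ graph_iso e triangle_rel.
Proof. by split=> [[]|]; [apply: extremal_graph_iso | apply: graph_iso_extremal]. Qed.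

End ExtremalGraphs.

Theorem theorem1p6 (R : rcfType) (n : nat) (e o : rel 'I_n) :
  (0 < n)%N -> simple_graph e -> connected_graph e -> orientation e o ->
  let m := num_edges e in
  let lhs := (skew_rank R o)%:R / (alpha e)%:R : R in
  let rhs := 4 * (2 * n%:R - m%:R - 1) /
             (Num.sqrt (4 * n%:R * (n%:R - 1) - 8 * m%:R + 1) + 1) - 2 : R in
  rhs <= lhs /\
  (lhs = rhs <-> graph_iso e (@star_rel n) \/ graph_iso e triangle_rel).
Proof.
move=> n_gt0 [e_loopless e_sym] e_conn o_orient m lhs rhs.
have e_irr : irreflexive e := fun x => negbTE (e_loopless x).
have natrE (x y : nat) : x%:R = y%:R :> R <-> x = y.
  by split=> [/eqP | -> //]; rewrite eqr_nat => /eqP.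
have count : 2 * m%:R + (alpha e)%:R ^+ 2 + n%:R <= n%:R ^+ 2 + (alpha e)%:R :> R.
  by rewrite -!natrX -!natrM -!natrD ler_nat alpha_count_bound.
have rank : 4 * n%:R <= (skew_rank R o)%:R + 2 * (alpha e)%:R + 2 * m%:R + 2 :> R.
  rewrite -!natrM -!natrD ler_nat.
  by have := skew_rank_forest_bound R e_irr e_sym o_orient (Ordinal n_gt0) e_conn.
have a_ge1 : 1 <= (alpha e)%:R :> R by rewrite ler1n (alpha_gt0 e_irr (Ordinal n_gt0)).
pose D : R := 4 * n%:R * (n%:R - 1) - 8 * m%:R + 1.
have D_ge0 : 0 <= D by rewrite /D; nra.
have [t_ge0 tE] := (sqrtr_ge0 D, sqr_sqrtr D_ge0).
have s_ge0 := ler0n R (skew_rank R o).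
split; first exact: ratio_lower_bound.
rewrite /lhs /rhs ratio_eq_bound // -!natrX -!natrM -!natrD.
apply: iff_trans (extremal_iff R n_gt0 e_irr e_sym e_conn o_orient).
by split=> -[count_eq rank_eq]; split; apply/natrE.
Qed.
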